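(* Let $w,z\in\mathbb A$ with $w\ne0$ and $w,z$ relatively prime in $\mathbb A$, put $\theta=z/w$ and $W=\mathcal N(w)$, and suppose $c\ge1$ is such that $c^{-1}\sqrt W\le|\sigma_i(w)|\le c\sqrt W$ for $i=1,2$. Then there is a constant $c'>0$ depending only on $q$, $d$ and $c$ such that for every $k\in\mathbb A$ with $0<\mathcal N(k)<W$, $$\max\{\|\Re(k\theta)\|,\ \|\Im(k\theta)\|\}\ge c'\,W^{-1/2}.$$
   Context: $q$ is an odd prime power, $d\in\mathbb{F}_q[T]$ monic, square-free, of even degree, $\sqrt d\in k_\infty=\mathbb{F}_q((1/T))$ a fixed square root, $|\cdot|$ the absolute value on $k_\infty$ with $|\sum_{i\le n}a_iT^i|=q^n$ ($a_n\ne0$). $K=\mathbb{F}_q(T)(\sqrt d)$, $\mathbb A=\mathbb{F}_q[T][\sqrt d]$, $\sigma_1(a+b\sqrt d)=a+b\sqrt d$, $\sigma_2(a+b\sqrt d)=a-b\sqrt d$ for $a,b\in k$, $\mathcal N(w)=|\sigma_1(w)\sigma_2(w)|$. For $f=a+b\sqrt d\in K$ with $a,b\in k$: $\Re(f)=a$, $\Im(f)=b$. For $x\in k_\infty$, $\|x\|=\inf_{r\in\mathbb{F}_q[T]}|x-r|$ (the absolute value of the fractional part of $x$). *)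

From HB Require Import structures.
From mathcomp Require Import all_boot all_order all_algebra.
From mathcomp Require Import fraction boolp classical_sets reals.
Set Implicit Arguments. Unset Strict Implicit. Unset Printing Implicit Defensive.
Import Order.TTheory GRing.Theory Num.Theory.
Local Open Scope ring_scope.
Local Open Scope classical_set_scope.

Notation "x %:F" := (@FracField.tofrac _ x) : ring_scope.

(* k_infty = F((1/T)) : Laurent series sum_{i <= N} a_i T^i, stored    *)
(* as a coefficient function int -> F together with an upper bound N   *)
(* on its support.                                                     *)
Record laurent (F : fieldType) := Laurent {
  lcoef :> int -> F ;
  lbd : int ;
  lbdP : forall n : int, lbd < n -> lcoef n = 0 }.

Section Laurent.
Variable F : fieldType.

Definition lpoly_coef (p : {poly F}) (n : int) : F :=
  match n with Posz m => p`_m | Negz _ => 0 end.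
Lemma lpoly_bdP (p : {poly F}) (n : int) :
  (size p)%:Z < n -> lpoly_coef p n = 0.
Proof.
case: n => [m|m] //= hm; rewrite nth_default //.
by move: hm; rewrite ltz_nat => /ltnW.
Qed.
Definition lpoly (p : {poly F}) : laurent F :=
  Laurent (@lpoly_bdP p).

Lemma ladd_bdP (x y : laurent F) (n : int) :
  (Order.max (lbd x) (lbd y) < n)%R -> x n + y n = 0.
Proof.
rewrite gt_max => /andP[hx hy]; by rewrite (lbdP hx) (lbdP hy) addr0.
Qed.
Definition ladd (x y : laurent F) : laurent F :=
  @Laurent F (fun n => x n + y n) (Order.max (lbd x) (lbd y)) (@ladd_bdP x y).

(* multiplication (Cauchy product; each coefficient is a finite sum:
   (xy)_n = sum_{i = n - lbd y}^{lbd x} x_i y_(n-i)) *)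
Definition lmul_coef (x y : laurent F) (n : int) : F :=
  if n <= lbd x + lbd y then
    \sum_(k < (absz (lbd x + lbd y - n)%R).+1)
       x (n - lbd y + k%:Z) * y (lbd y - k%:Z)
  else 0.
Lemma lmul_bdP (x y : laurent F) (n : int) :
  lbd x + lbd y < n -> lmul_coef x y n = 0.
Proof. by rewrite /lmul_coef ltNge => /negbTE ->. Qed.
Definition lmul (x y : laurent F) : laurent F :=
  @Laurent F (lmul_coef x y) (lbd x + lbd y) (@lmul_bdP x y).

Definition leq_ls (x y : laurent F) : Prop := forall n, x n = y n.
End Laurent.

Definition sqfree_poly (F : fieldType) (d : {poly F}) : Prop :=
  forall p : {poly F}, p ^+ 2 %| d -> (size p <= 1)%N.

Section Values.
Variables (F : finFieldType) (R : realType).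

Definition qR : R := (#|F|%:R : R).

(* |sum_{i<=n} a_i T^i| = q^n (a_n <> 0), |0| = 0 *)
Definition labs (x : laurent F) : R :=
  sup [set qR ^ n | n in [set n : int | x n != 0]].

Definition kabs (x : {fraction {poly F}}) : R :=
  let r := repr x in
  if \n_r == 0 then 0
  else qR ^ ((size \n_r)%:Z - (size \d_r)%:Z).

Definition kdist (x : {fraction {poly F}}) : R :=
  inf [set kabs (x - r%:F) | r in [set: {poly F}]].
End Values.

(* K = k(sqrt d) as pairs (a, b) <-> a + b sqrt d, a b in k,           *)
(* and the order A = F[T][sqrt d] as pairs of polynomials.             *)
Section Quadratic.
Variables (F : finFieldType) (R : realType) (d : {poly F}).

Definition Kelt := ({fraction {poly F}} * {fraction {poly F}})%type.
Definition Aelt := ({poly F} * {poly F})%type.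

Definition Kmul (x y : Kelt) : Kelt :=
  (x.1 * y.1 + x.2 * y.2 * d%:F, x.1 * y.2 + x.2 * y.1).
Definition Kinv (x : Kelt) : Kelt :=
  let nm := x.1 ^+ 2 - x.2 ^+ 2 * d%:F in (x.1 / nm, - x.2 / nm).
Definition Kdiv (x y : Kelt) : Kelt := Kmul x (Kinv y).
Definition KRe (x : Kelt) := x.1.
Definition KIm (x : Kelt) := x.2.

Definition AtoK (w : Aelt) : Kelt := (w.1%:F, w.2%:F).
Definition Amul (x y : Aelt) : Aelt :=
  (x.1 * y.1 + x.2 * y.2 * d, x.1 * y.2 + x.2 * y.1).
Definition Aadd (x y : Aelt) : Aelt := (x.1 + y.1, x.2 + y.2).

Definition Acoprime (w z : Aelt) : Prop :=
  exists u v : Aelt, Aadd (Amul u w) (Amul v z) = (1, 0).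

(* the two embeddings A -> k_infty, given sd with sd^2 = d in k_infty *)
Definition sigma1 (sd : laurent F) (w : Aelt) : laurent F :=
  ladd (lpoly w.1) (lmul (lpoly w.2) sd).
Definition sigma2 (sd : laurent F) (w : Aelt) : laurent F :=
  ladd (lpoly w.1) (lmul (lpoly (- w.2)) sd).
Definition sigma (sd : laurent F) (i : 'I_2) (w : Aelt) : laurent F :=
  if val i == 0%N then sigma1 sd w else sigma2 sd w.

Definition Anorm (sd : laurent F) (w : Aelt) : R :=
  labs R (lmul (sigma1 sd w) (sigma2 sd w)).
End Quadratic.

From HB Require Import structures.
From mathcomp Require Import all_boot all_order all_algebra.
From mathcomp Require Import fraction boolp classical_sets reals.
From mathcomp Require Import zify ring generic_quotient.
Import Order.TTheory GRing.Theory Num.Theory.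
Local Open Scope ring_scope.

(* Write x̄ = (x1, -x2) for the conjugate of x = x1 + x2 sqrt d in A and
   N(x) = x1^2 - x2^2 d for its norm form, so that x x̄ = N(x) and
   sigma1(x) sigma2(x) = N(x) in k_infty; hence the analytic norm of x is the
   absolute value q^(deg N(x)) of a polynomial.  Put n = N(w); then
   k theta = (k z w̄)/n.  If both ||Re(k theta)|| and ||Im(k theta)|| were below
   c' |n|^-1/2, there would be r in A with e = k z w̄ - r n of components of
   degree < (deg n)/2 - deg d, forcing deg N(e) < deg n.  But e = (kz - rw) w̄,
   so N(e) = n N(kz - rw), hence N(kz - rw) = 0, and since d is square-free of
   positive degree (not a square in k) kz = rw.  As w and z are coprime, w
   divides k, so N(w) <= N(k), contradicting N(k) < N(w). *)

Set Implicit Arguments. Unset Strict Implicit. Unset Printing Implicit Defensive.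

Section LaurentRing.
Variable F : fieldType.
Implicit Types x y z : laurent F.

(* f a + f (a+1) + ... + f (a+N-1): every Cauchy-product coefficient is one *)
Definition wsum (f : int -> F) (a : int) (N : nat) : F :=
  \sum_(k < N) f (a + k%:Z).

Lemma wsum_split f a (s N : nat) :
  wsum f a (s + N) = wsum f a s + wsum f (a + s%:Z) N.
Proof.
rewrite /wsum big_split_ord /=; congr (_ + _).
by apply: eq_bigr => k _; rewrite /= PoszD addrA.
Qed.

Lemma wsum0 f a N :
  (forall k : nat, (k < N)%N -> f (a + k%:Z) = 0) -> wsum f a N = 0.
Proof. by move=> h; rewrite /wsum big1 // => k _; apply: h. Qed.

Lemma wsum_widen (f : int -> F) (a : int) N (A E : int) :
  A <= a -> a + N%:Z <= E -> (forall i, f i != 0 -> a <= i < a + N%:Z) ->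
  wsum f a N = wsum f A (absz (E - A)).
Proof.
move=> hA hE hs.
have eE : absz (E - A) = (absz (a - A)%R + (N + absz (E - a - N%:Z)%R))%N.
  by lia.
rewrite eE wsum_split [wsum f A _]wsum0; last first.
  by move=> k hk; apply/eqP/negP => /negP /hs; lia.
rewrite wsum_split [X in _ = _ + (_ + X)]wsum0; last first.
  by move=> k hk; apply/eqP/negP => /negP /hs; lia.
by rewrite add0r addr0; congr wsum; lia.
Qed.

Lemma wsum_eq (f : int -> F) (a : int) N (a' : int) N' :
  (forall i, f i != 0 -> (a <= i < a + N%:Z) && (a' <= i < a' + N'%:Z)) ->
  wsum f a N = wsum f a' N'.
Proof.
move=> hs; set A := Order.min a a'.
set E := Order.max (a + N%:Z) (a' + N'%:Z).
rewrite (@wsum_widen f a N A E) ?ge_min ?le_max ?lexx //; last first.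
  by move=> i /hs /andP[].
rewrite (@wsum_widen f a' N' A E) ?ge_min ?le_max ?lexx ?orbT //.
by move=> i /hs /andP[].
Qed.

Lemma lmul_supp x y (n i : int) :
  x i * y (n - i) != 0 -> (n - lbd y <= i) && (i <= lbd x).
Proof.
rewrite mulf_eq0 negb_or => /andP[hx hy]; apply/andP; split.
  by apply/negP => h; move: hy; rewrite lbdP ?eqxx //; lia.
by apply/negP => h; move: hx; rewrite lbdP ?eqxx //; lia.
Qed.

Lemma lmul_window x y (n a : int) N :
  (forall i, x i * y (n - i) != 0 -> a <= i < a + N%:Z) ->
  lmul x y n = wsum (fun i => x i * y (n - i)) a N.
Proof.
move=> hw; rewrite /= /lmul_coef; case: ifP => h.
  transitivity (wsum (fun i => x i * y (n - i)) (n - lbd y)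
     (absz (lbd x + lbd y - n)%R).+1).
    by apply: eq_bigr => k _; congr (_ * y _); lia.
  by apply: wsum_eq => i hi; have := lmul_supp hi; have := hw _ hi; lia.
by symmetry; apply: wsum0 => k hk; apply/eqP/negP => /negP /lmul_supp; lia.
Qed.

Lemma lmul_window_bd x y (n a : int) N :
  a <= n - lbd y -> lbd x < a + N%:Z ->
  lmul x y n = wsum (fun i => x i * y (n - i)) a N.
Proof. by move=> h1 h2; apply: lmul_window => i /lmul_supp; lia. Qed.

Lemma lmul_congr x x' y y' :
  leq_ls x x' -> leq_ls y y' -> leq_ls (lmul x y) (lmul x' y').
Proof.
move=> hx hy n; set a := n - lbd y; set N := (absz (lbd x - a)%R).+1.
rewrite (@lmul_window_bd x y n a N); try lia.
rewrite (@lmul_window x' y' n a N).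
  by apply: eq_bigr => k _; rewrite hx hy.
by move=> i; rewrite -hx -hy => /lmul_supp; lia.
Qed.

Lemma lmulC x y : leq_ls (lmul x y) (lmul y x).
Proof.
move=> n; set a := n - lbd y; set N := (absz (lbd x - a)%R).+1.
rewrite (@lmul_window_bd x y n a N); try lia.
rewrite (@lmul_window_bd y x n (n - a - N%:Z + 1) N); try lia.
rewrite /wsum (reindex_inj rev_ord_inj) /=.
apply: eq_bigr => k _; rewrite mulrC.
by congr (y _ * x _); have := ltn_ord k; rewrite -subzn //; lia.
Qed.

Lemma lmulDl x y z : leq_ls (lmul (ladd x y) z) (ladd (lmul x z) (lmul y z)).
Proof.
move=> n; set a := n - lbd z.
set N := (absz (lbd x - a)%R + absz (lbd y - a)%R).+1.
change (lmul (ladd x y) z n = lmul x z n + lmul y z n).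
rewrite (@lmul_window_bd x z n a N); try lia.
rewrite (@lmul_window_bd y z n a N); try lia.
rewrite (@lmul_window (ladd x y) z n a N).
  by rewrite /wsum -big_split /=; apply: eq_bigr => k _; rewrite mulrDl.
move=> i; rewrite /= mulrDl => hi.
have [h1|h1] := eqVneq (x i * z (n - i)) 0; last by move/lmul_supp: h1; lia.
have h2 : y i * z (n - i) != 0 by move: hi; rewrite h1 add0r.
by move/lmul_supp: h2; lia.
Qed.

Lemma lmulDr x y z : leq_ls (lmul x (ladd y z)) (ladd (lmul x y) (lmul x z)).
Proof.
move=> n; rewrite lmulC lmulDl.
change (lmul y x n + lmul z x n = lmul x y n + lmul x z n).
by rewrite !(lmulC _ x).
Qed.

Lemma lmulA x y z : leq_ls (lmul (lmul x y) z) (lmul x (lmul y z)).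
Proof.
move=> n; set a := n - lbd z; set b := a - lbd y.
set M := (absz (lbd x - b)%R).+1; set N := (absz (lbd x + lbd y - a)%R + M)%N.
rewrite (@lmul_window_bd (lmul x y) z n a N); try (simpl; lia).
rewrite (@lmul_window_bd x (lmul y z) n b M); try (simpl; lia).
rewrite /wsum; transitivity (\sum_(k < N) \sum_(j < M)
   x (b + j%:Z) * y (a + k%:Z - (b + j%:Z)) * z (n - (a + k%:Z))).
  apply: eq_bigr => k _.
  rewrite (@lmul_window_bd x y (a + k%:Z) b M); try (simpl; lia).
  by rewrite /wsum mulr_suml.
rewrite exchange_big /=; apply: eq_bigr => j _.
rewrite -[lmul_coef y z _]/(lcoef (lmul y z) _).
rewrite (@lmul_window_bd y z (n - (b + j%:Z)) (a - b - j%:Z) N);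
  try (have := ltn_ord j; simpl; lia).
rewrite /wsum mulr_sumr; apply: eq_bigr => k _.
by rewrite mulrA; congr (_ * y _ * z _); lia.
Qed.

Lemma lmul_lpoly (p q : {poly F}) :
  leq_ls (lmul (lpoly p) (lpoly q)) (lpoly (p * q)).
Proof.
have supp (r : {poly F}) (i : int) : lpoly r i != 0 -> 0 <= i.
  by case: i => [m|m] /=; rewrite ?eqxx.
move=> [m|m].
  rewrite (@lmul_window _ _ _ 0 m.+1); last first.
    by move=> i; rewrite mulf_eq0 negb_or => /andP[/supp h1 /supp h2]; lia.
  rewrite /wsum /= coefM; apply: eq_bigr => k _.
  by rewrite add0n subzn ?add0n //= -ltnS.
rewrite (@lmul_window (lpoly p) (lpoly q) (Negz m) 0 0) ?/wsum ?big_ord0 //.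
by move=> i; rewrite mulf_eq0 negb_or => /andP[/supp h1 /supp h2]; lia.
Qed.

Lemma lpolyD (p q : {poly F}) (n : int) :
  lpoly (p + q) n = lpoly p n + lpoly q n.
Proof. by case: n => m /=; rewrite ?coefD ?addr0. Qed.
End LaurentRing.

Section NormForm.
Variables (F : finFieldType) (d : {poly F}).
Implicit Types x y z : Aelt F.

Definition nA x : {poly F} := x.1 ^+ 2 - x.2 ^+ 2 * d.
Definition Aconj x : Aelt F := (x.1, - x.2).
Definition Asub x y : Aelt F := (x.1 - y.1, x.2 - y.2).

Lemma AmulC x y : Amul d x y = Amul d y x.
Proof. by rewrite /Amul; congr pair; ring. Qed.

Lemma AmulA x y z : Amul d x (Amul d y z) = Amul d (Amul d x y) z.
Proof. by rewrite /Amul /=; congr pair; ring. Qed.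

Lemma AmulDl x y z : Amul d (Aadd x y) z = Aadd (Amul d x z) (Amul d y z).
Proof. by rewrite /Amul /Aadd /=; congr pair; ring. Qed.

Lemma Amul1 x : Amul d x (1, 0) = x.
Proof. by case: x => x1 x2; rewrite /Amul /=; congr pair; ring. Qed.

Lemma nAM x y : nA (Amul d x y) = nA x * nA y.
Proof. by rewrite /nA /Amul /=; ring. Qed.

Lemma nA_conj x : nA (Aconj x) = nA x.
Proof. by rewrite /nA /= sqrrN. Qed.

Lemma sigma_prod (sd : laurent F) x : leq_ls (lmul sd sd) (lpoly d) ->
  leq_ls (lmul (sigma1 sd x) (sigma2 sd x)) (lpoly (nA x)).
Proof.
move=> hsd n; rewrite /sigma1 /sigma2.
set A := lpoly x.1; set B := lpoly x.2; set B' := lpoly (- x.2).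
have laddE (u v : laurent F) m : ladd u v m = u m + v m by [].
rewrite lmulDl laddE lmulDr laddE lmulDr laddE.
have eAB : lmul A (lmul B' sd) n = lmul (lpoly (x.1 * - x.2)) sd n.
  by rewrite -lmulA; apply: lmul_congr => // m; exact: lmul_lpoly.
have eBA : lmul (lmul B sd) A n = lmul (lpoly (x.1 * x.2)) sd n.
  by rewrite lmulC -lmulA; apply: lmul_congr => // m; exact: lmul_lpoly.
have eBB : lmul (lmul B sd) (lmul B' sd) n = lpoly (x.2 * (- x.2 * d)) n.
  rewrite lmulA; transitivity (lmul B (lpoly (- x.2 * d)) n); last first.
    exact: lmul_lpoly.
  apply: lmul_congr => // m.
  rewrite -lmulA (lmul_congr (lmulC sd B') (fun=> erefl)) lmulA.
  by rewrite (lmul_congr (fun=> erefl) hsd) lmul_lpoly.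
have cancel_sd :
    lmul (lpoly (x.1 * - x.2)) sd n + lmul (lpoly (x.1 * x.2)) sd n = 0.
  rewrite -laddE -lmulDl (@lmul_window _ _ _ _ 0 0) ?/wsum ?big_ord0 // => i.
  by rewrite /= -lpolyD mulrN addNr; case: i => i /=; rewrite ?coef0 mul0r eqxx.
rewrite lmul_lpoly eAB eBA eBB -addrA (addrA (lmul _ sd n)) cancel_sd add0r.
by rewrite -lpolyD /nA; congr (lcoef (lpoly _) n); ring.
Qed.

(* a square-free d of positive degree is not a square in F(T), so the norm
   form is anisotropic *)
Lemma nA_eq0 x : sqfree_poly d -> (1 < size d)%N -> nA x = 0 -> x = (0, 0).
Proof.
case: x => x1 x2 sqd d_gt1; rewrite /nA /= => /eqP; rewrite subr_eq0 => /eqP e.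
have [x2_0|x2_0] := eqVneq x2 0.
  by move: e; rewrite x2_0 expr0n mul0r => /eqP; rewrite expf_eq0 /= => /eqP ->.
exfalso; set g := gcdp x1 x2.
have g0 : g != 0 by rewrite gcdp_eq0 negb_and x2_0 orbT.
set a := x1 %/ g; set b := x2 %/ g.
have ea : x1 = a * g by rewrite divpK // dvdp_gcdl.
have eb : x2 = b * g by rewrite divpK // dvdp_gcdr.
have cop : coprimep a b by apply: coprimep_div_gcd; rewrite x2_0 orbT.
have e2 : a ^+ 2 = b ^+ 2 * d.
  apply: (mulIf (expf_neq0 2 g0)); move: e; rewrite ea eb !exprMn.
  by move=> ->; rewrite mulrAC.
have b2_unit : (size (b ^+ 2) == 1)%N.
  have dv : b ^+ 2 %| a ^+ 2 by rewrite e2 dvdp_mulr.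
  have cop2 : coprimep (b ^+ 2) (a ^+ 2).
    by rewrite coprimep_expl // coprimep_expr // coprimep_sym.
  by have := coprimep_dvdl dv cop2; rewrite coprimep_def gcdpp.
case/size_poly1P: b2_unit => u u0 eu.
have sa : (size a <= 1)%N.
  apply: sqd; have -> : d = u^-1%:P * a ^+ 2.
    by rewrite e2 eu mulrA -polyCM mulVf // mul1r.
  exact: dvdp_mull.
have : (size (a ^+ 2) <= 1)%N.
  rewrite expr2; apply: leq_trans (size_polyMleq _ _) _.
  by case: (size a) sa => [|[|]].
by rewrite e2 eu mul_polyC size_scale // leqNgt d_gt1.
Qed.

Lemma remainder_conj k z w r :
  let P := Amul d k (Amul d z (Aconj w)) in
  (P.1 - r.1 * nA w, P.2 - r.2 * nA w)
  = Amul d (Asub (Amul d k z) (Amul d r w)) (Aconj w).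
Proof. by rewrite /Asub /Amul /nA /=; congr pair; ring. Qed.

Lemma Acoprime_dvd w z k r :
  Acoprime d w z -> Amul d k z = Amul d r w -> exists m, k = Amul d m w.
Proof.
case=> [u [v cuv]] kz; exists (Aadd (Amul d k u) (Amul d v r)).
rewrite -{1}(Amul1 k) -cuv [Amul d k _]AmulC !AmulDl.
by rewrite -!AmulA (AmulC w k) (AmulC z k) kz !AmulA (AmulC u k).
Qed.
End NormForm.

Lemma frac_repr (R : idomainType) (x : {fraction R}) :
  x = (\n_(repr x))%:F / (\d_(repr x))%:F.
Proof.
rewrite -[x in LHS]reprK; move: (repr x) => r.
have -> : forall a b : {fraction R}, a / b = FracField.mul a (FracField.inv b).
  by [].
unlock FracField.tofrac; rewrite -FracField.pi_inv -FracField.pi_mul.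
apply/eqmodP; rewrite /= FracField.equivfE /FracField.mulf /FracField.invf /=.
by rewrite !numden_Ratio ?mul1r ?mulr1 ?oner_neq0 ?denom_ratioP // mulrC.
Qed.

Section AbsoluteValues.
Variables (F : finFieldType) (R : realType).
Local Notation q := (qR F R).

Lemma qR_gt1 : 1 < q.
Proof.
rewrite /qR ltr1n; apply/card_gt1P; exists 0, 1; split => //.
by rewrite eq_sym oner_eq0.
Qed.

Lemma qR_gt0 : 0 < q.
Proof. exact: lt_trans ltr01 qR_gt1. Qed.

Definition pabs (p : {poly F}) : R :=
  if p == 0 then 0 else q ^ ((size p).-1)%:Z.

Lemma pabs_gt0 (p : {poly F}) : (0 < pabs p) = (p != 0).
Proof. by rewrite /pabs; case: eqP => _; rewrite ?ltxx ?exprz_gt0 ?qR_gt0. Qed.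

Lemma pabs_mull_ge (a b : {poly F}) : a != 0 -> pabs b <= pabs (a * b).
Proof.
move=> a0; rewrite /pabs mulf_eq0 (negbTE a0) /=; case: eqP => // /eqP b0.
rewrite ler_eXz2l ?qR_gt1 // lez_nat size_mul //.
by have := size_poly_gt0 a; rewrite a0; move: (size a) (size b) => A B; lia.
Qed.

Lemma labs_congr (x y : laurent F) : leq_ls x y -> labs R x = labs R y.
Proof.
move=> h; rewrite /labs; congr sup; congr image.
by apply/funext => n /=; rewrite h.
Qed.

Lemma labs_lpoly (p : {poly F}) : labs R (lpoly p) = pabs p.
Proof.
rewrite /labs /pabs; case: eqP => [->|/eqP p0].
  rewrite (_ : [set n : int | lpoly 0 n != 0]%classic = set0) ?image_set0 ?sup0 //.
  by apply/funext => -[m|m] /=; rewrite ?coef0 eqxx; apply/propext.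
set S := image _ _.
have inS : S (q ^ ((size p).-1)%:Z).
  by exists ((size p).-1)%:Z => //=; rewrite -lead_coefE lead_coef_eq0.
have ub : ubound S (q ^ ((size p).-1)%:Z).
  move=> _ [[m|m] /= hm <-]; last by rewrite eqxx in hm.
  rewrite ler_eXz2l ?qR_gt1 // lez_nat.
  case: (leqP m (size p).-1) => // h; move: hm.
  by rewrite nth_default ?eqxx //; move: h; case: (size p).
apply/eqP; rewrite eq_le; apply/andP; split.
  by apply: ge_sup => //; exists (q ^ ((size p).-1)%:Z).
by apply: ub_le_sup => //; exists (q ^ ((size p).-1)%:Z).
Qed.

Lemma Anorm_pabs (d : {poly F}) (sd : laurent F) (x : Aelt F) :
  leq_ls (lmul sd sd) (lpoly d) -> Anorm R sd x = pabs (nA d x).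
Proof.
by move=> hsd; rewrite /Anorm (labs_congr (sigma_prod x hsd)) labs_lpoly.
Qed.

Lemma kabs_frac (a b : {poly F}) : b != 0 ->
  kabs R (a%:F / b%:F) = if a == 0 then 0 else q ^ ((size a)%:Z - (size b)%:Z).
Proof.
move=> b0; rewrite /kabs; set r := repr _.
have hx := frac_repr (a%:F / b%:F); rewrite -/r in hx.
have d0 : \d_r != 0 by [].
have b0F : b%:F != 0 by rewrite tofrac_eq0.
have d0F : (\d_r)%:F != 0 by rewrite tofrac_eq0.
have cross : a * \d_r = \n_r * b.
  apply/eqP; rewrite -tofrac_eq !tofracM; apply/eqP.
  by rewrite -[a%:F](divfK b0F) hx mulrAC divfK.
case: eqP => [n0|/eqP n0].
  move: cross; rewrite n0 mul0r => /eqP; rewrite mulf_eq0 (negbTE d0) orbF.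
  by move=> /eqP ->; rewrite eqxx.
have a0 : a != 0.
  apply/negP => /eqP a0; move: cross; rewrite a0 mul0r => /esym/eqP.
  by rewrite mulf_eq0 (negbTE b0) (negbTE n0).
rewrite (negbTE a0); congr (_ ^ _).
have := congr1 (fun p : {poly F} => size p) cross; rewrite /= !size_mul //.
have := size_poly_gt0 a; have := size_poly_gt0 b.
have := size_poly_gt0 (\n_r); have := size_poly_gt0 (\d_r).
rewrite a0 b0 n0 d0 /=.
move: (size a) (size b) (size \n_r) (size \d_r) => A B Nn D.
by move=> h1 h2 h3 h4; rewrite -!subn1 => h5; lia.
Qed.

Lemma exprz_lt_div_sqrt (a b c : int) :
  q ^ a < q ^ b / Num.sqrt (q ^ c) -> 2 * a + c < 2 * b.
Proof.
have q1 := qR_gt1; have q0 := qR_gt0.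
set s := Num.sqrt _; have s0 : 0 < s by rewrite sqrtr_gt0 exprz_gt0.
rewrite ltr_pdivlMr // => h.
have h2 : (q ^ a * s) * (q ^ a * s) < q ^ b * q ^ b.
  by apply: ltr_pM => //; rewrite mulr_ge0 // ?exprz_ge0 ?ltW.
rewrite mulrACA -(expr2 s) sqr_sqrtr ?exprz_ge0 ?ltW // in h2.
by move: h2; rewrite -!expfzDr ?gt_eqF // ltr_eXz2l //; lia.
Qed.

Lemma kdist_approx (P n : {poly F}) (g : nat) : n != 0 ->
  kdist R (P%:F / n%:F) < q ^ (- g%:Z) / Num.sqrt (pabs n) ->
  exists r : {poly F},
    P - r * n = 0 \/ (2 * size (P - r * n)%R + 2 * g <= size n)%N.
Proof.
move=> n0 /inf_lt []; first by exists (kabs R (P%:F / n%:F - 0%:F)); exists 0.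
move=> _ [r _ <-] small; exists r; move: small.
have nF : n%:F != 0 by rewrite tofrac_eq0.
have -> : P%:F / n%:F - r%:F = (P - r * n)%:F / n%:F.
  by rewrite tofracB tofracM mulrBl mulfK.
rewrite kabs_frac // /pabs (negbTE n0); case: eqP => [-> _|_]; first by left.
move/exprz_lt_div_sqrt => h; right.
by have := size_poly_gt0 n; rewrite n0; lia.
Qed.
End AbsoluteValues.

Lemma mul_size_lt_eq0 (R : idomainType) (a b : {poly R}) :
  a != 0 -> (size (b * a)%R < size a)%N -> b = 0.
Proof.
move=> a0; have [->//|b0] := eqVneq b 0; rewrite size_mul //.
by have := size_poly_gt0 b; rewrite b0; move: (size a) (size b) => A B; lia.
Qed.

Section Approximation.
Variables (F : finFieldType) (d : {poly F}).

Lemma ktheta_eq (k z w : Aelt F) : nA d w != 0 ->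
  let P := Amul d k (Amul d z (Aconj w)) in
  Kmul d (AtoK k) (Kdiv d (AtoK z) (AtoK w))
  = (P.1%:F / (nA d w)%:F, P.2%:F / (nA d w)%:F).
Proof.
move=> n0 P; have : (nA d w)%:F != 0 by rewrite tofrac_eq0.
rewrite /P /Kmul /Kdiv /Kinv /AtoK /nA /Amul /Aconj /=.
rewrite !(tofracD, tofracM, tofracN, tofracB, tofracXn) -!expr2.
move: (k.1)%:F (k.2)%:F (z.1)%:F (z.2)%:F (w.1)%:F (w.2)%:F d%:F.
move=> k1 k2 z1 z2 w1 w2 D; move: (w1 ^+ 2 - w2 ^+ 2 * D) => N N0.
by congr pair; ring.
Qed.

Lemma size_nA_lt (e : Aelt F) (sn : nat) : (0 < sn)%N ->
  e.1 = 0 \/ (2 * size e.1 + 2 * size d <= sn)%N ->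
  e.2 = 0 \/ (2 * size e.2 + 2 * size d <= sn)%N ->
  (size (nA d e) < sn)%N.
Proof.
case: e => e1 e2 /= sn0 small1 small2; rewrite /nA /=.
set s1 := size e1 in small1 *; set s2 := size e2 in small2 *.
set sd := size d in small1 small2 *.
apply: leq_ltn_trans (size_polyD _ _) _; rewrite size_polyN gtn_max.
have sq1 : (size (e1 ^+ 2) <= 2 * s1 - 1)%N.
  by rewrite expr2; apply: leq_trans (size_polyMleq _ _) _; lia.
have sq2 : (size (e2 ^+ 2 * d)%R <= 2 * s2 - 1 + sd - 1)%N.
  have sqe2 : (size (e2 ^+ 2) <= 2 * s2 - 1)%N.
    by rewrite expr2; apply: leq_trans (size_polyMleq _ _) _; lia.
  by apply: leq_trans (size_polyMleq _ _) _; rewrite -/sd; lia.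
apply/andP; split.
  case: small1 => [->|small1]; first by rewrite expr0n /= size_poly0.
  by apply: leq_ltn_trans sq1 _; lia.
case: small2 => [->|small2]; first by rewrite expr0n mul0r size_poly0.
have [e2_0|e2_gt0] := posnP s2.
  move/eqP: e2_0; rewrite size_poly_eq0 => /eqP ->.
  by rewrite expr0n mul0r size_poly0.
by apply: leq_ltn_trans sq2 _; lia.
Qed.
End Approximation.

Theorem mainTheorem11 (F : finFieldType) (R : realType) (d : {poly F})
  (sd : laurent F) (c : R) :
  odd #|F| ->
  d \is monic -> sqfree_poly d -> ~~ odd (size d).-1 -> (1 < size d)%N ->
  leq_ls (lmul sd sd) (lpoly d) ->
  1 <= c ->
  exists c' : R, 0 < c' /\
    forall w z : Aelt F,
      w != (0, 0) -> Acoprime d w z ->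
      let theta := Kdiv d (AtoK z) (AtoK w) in
      let W := Anorm R sd w in
      (forall i : 'I_2,
         c^-1 * Num.sqrt W <= labs R (sigma sd i w) <= c * Num.sqrt W) ->
      forall k : Aelt F,
        0 < Anorm R sd k < W ->
        c' / Num.sqrt W <=
          Num.max (kdist R (KRe (Kmul d (AtoK k) theta)))
                  (kdist R (KIm (Kmul d (AtoK k) theta))).
Proof.
move=> _ _ sqd _ d_gt1 sd2 _.
exists (qR F R ^ (- (size d)%:Z)); split; first by rewrite exprz_gt0 // qR_gt0.
move=> w z _ cop theta W _ k; rewrite /W !(Anorm_pabs _ _ sd2).
case/andP=> k_gt0 k_lt_w; set n := nA d w.
have n0 : n != 0 by rewrite -(pabs_gt0 R) (lt_trans k_gt0 k_lt_w).
rewrite leNgt gt_max /theta (ktheta_eq k z n0) /=; apply/negP.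
case/andP=> /(kdist_approx n0) [r1 small1] /(kdist_approx n0) [r2 small2].
set r : Aelt F := (r1, r2).
(* N(k z w̄ - r n) = n N(k z - r w) has degree below that of n *)
have kz_rw : Amul d k z = Amul d r w.
  have norm_rem : nA d (Asub (Amul d k z) (Amul d r w)) = 0.
    apply: (mul_size_lt_eq0 n0).
    rewrite /n -(nA_conj d w) -nAM -remainder_conj nA_conj.
    by apply: size_nA_lt; [rewrite size_poly_gt0 | exact: small1 | exact: small2].
  move: (nA_eq0 sqd d_gt1 norm_rem); rewrite /Asub.
  by case: (Amul d k z) (Amul d r w) => [? ?] [? ?] [/subr0_eq -> /subr0_eq ->].
have [m km] := Acoprime_dvd cop kz_rw.
have nk : nA d k = nA d m * n by rewrite km nAM.
have m0 : nA d m != 0.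
  by apply: contraTneq k_gt0 => m0; rewrite nk m0 mul0r pabs_gt0 eqxx.
by move: k_lt_w; rewrite nk ltNge pabs_mull_ge.
Qed.
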